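(* Let $n\in\mathbb{N}$, let $0\le\alpha_1\le\alpha_2\le\dots\le\alpha_n$ and $\beta_1\ge\beta_2\ge\dots\ge\beta_n\ge0$ be real numbers, and set $D_1=\bigoplus_{j=1}^n\mathrm{diag}(\alpha_j,\alpha_j)$ and $D_2=\bigoplus_{j=1}^n\mathrm{diag}(\beta_j,\beta_j)$ (both $2n\times 2n$). Then $$\min_{S\in\mathrm{Sp}(2n)}\operatorname{Tr}[D_1SD_2S^\intercal]=\operatorname{Tr}[D_1D_2],$$ where the minimum is over all real symplectic $2n\times 2n$ matrices.
   Context: $\mathrm{Sp}(2n)$ is the set of real $2n\times 2n$ matrices $S$ with $S\Omega S^\intercal=\Omega$, where $\Omega=\bigoplus_{i=1}^n\begin{pmatrix}0&1\\-1&0\end{pmatrix}$. *)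

From HB Require Import structures.
From mathcomp Require Import all_boot all_order all_algebra.
From mathcomp Require Import reals.
Set Implicit Arguments. Unset Strict Implicit. Unset Printing Implicit Defensive.
Import Order.TTheory GRing.Theory Num.Theory.
Local Open Scope ring_scope.

(* Indices of 2n x 2n matrices are i : 'I_(2*n); index i (0-based) belongs
   to the 2x2 block number i./2 < n. *)
Lemma half_ord_proof (n : nat) (i : 'I_(2 * n)) : (i./2 < n)%N.
Proof.
case: i => i /= Hi. rewrite -(ltn_pmul2l (isT : (0 < 2)%N)).
apply: leq_ltn_trans Hi. by rewrite -{2}(odd_double_half i) -muln2 mulnC leq_addl.
Qed.

Definition half_ord (n : nat) (i : 'I_(2 * n)) : 'I_n := Ordinal (half_ord_proof i).

(* Omega = (+)_{j=1}^n [[0,1],[-1,0]] *)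
Definition Omega (R : pzRingType) (n : nat) : 'M[R]_(2 * n) :=
  \matrix_(i, k) (((i.+1 == k :> nat) && ~~ odd i)%:R - ((k.+1 == i :> nat) && ~~ odd k)%:R).

Definition symplectic (R : pzRingType) (n : nat) (S : 'M[R]_(2 * n)) : Prop :=
  S *m Omega R n *m S^T = Omega R n.

Definition blockdiag2 (R : pzRingType) (n : nat) (a : 'I_n -> R) : 'M[R]_(2 * n) :=
  \matrix_(i, k) ((i == k)%:R * a (half_ord i)).

(* Both sides are bilinear in (alpha, beta), and by Abel summation alpha and
   beta are nonnegative combinations of the step functions [p <= j] and
   [j <= q].  So it suffices to take for D1, D2 the orthogonal projections E, F
   onto coordinate symplectic subspaces.  If EF = 0 the claim is
   Tr(E S F S^T) = |E S F|^2 >= 0.  Otherwise (1 - E)(1 - F) = 0, so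
   Tr(EF) = Tr E + Tr F - 2n.  For A = E S F and M = (1 - E) S F, the facts
   S^-1 = Om S^T Om^T and [E, Om] = [F, Om] = 0 give
   F = Om A^T Om^T A + F S^-1 M.  On the orthogonal complement P of the row
   space of M this yields Tr(F P) = Tr(Om A^T Om^T A P) <= |A|^2 by
   Cauchy-Schwarz, while Tr(F P) >= Tr F - rank M >= Tr F + Tr E - 2n. *)

From HB Require Import structures.
From mathcomp Require Import all_boot all_order all_algebra lra.
From mathcomp Require Import reals.
Set Implicit Arguments. Unset Strict Implicit. Unset Printing Implicit Defensive.
Import Order.TTheory GRing.Theory Num.Theory.
Local Open Scope ring_scope.

Section OrthogonalProjection.
Variable R : pzRingType.

Definition orthoproj n (P : 'M[R]_n) := P^T = P /\ P *m P = P.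

Lemma orthoproj_compl n (P : 'M[R]_n) : orthoproj P -> orthoproj (1%:M - P).
Proof.
case=> Ps Pi; split; first by rewrite linearB /= trmx1 Ps.
by rewrite mulmxBl !mulmxBr !mul1mx mulmx1 Pi subrr subr0.
Qed.

End OrthogonalProjection.

Section RealTrace.
Variable R : realFieldType.

Lemma mxtrace_mul_trmx m n (X : 'M[R]_(m, n)) :
  \tr (X *m X^T) = \sum_i \sum_j X i j ^+ 2.
Proof.
by apply: eq_bigr => i _; rewrite mxE; apply: eq_bigr => j _; rewrite mxE expr2.
Qed.

Lemma mxtrace_mul_trmx_ge0 m n (X : 'M[R]_(m, n)) : 0 <= \tr (X *m X^T).
Proof.
by rewrite mxtrace_mul_trmx; apply: sumr_ge0 => i _; apply: sumr_ge0 => j _; apply: sqr_ge0.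
Qed.

Lemma mul_trmx_eq0 m n (X : 'M[R]_(m, n)) : X *m X^T = 0 -> X = 0.
Proof.
move=> XXt0; have : \tr (X *m X^T) == 0 by rewrite XXt0 mxtrace0.
rewrite mxtrace_mul_trmx psumr_eq0 => [/allP X0|i _]; last first.
  by apply: sumr_ge0 => j _; apply: sqr_ge0.
apply/matrixP => i j; move/implyP: (X0 i (mem_index_enum _)) => /(_ isT).
rewrite psumr_eq0 => [/allP/(_ j (mem_index_enum _))/implyP/(_ isT)|k _]; last exact: sqr_ge0.
by rewrite sqrf_eq0 mxE => /eqP.
Qed.

Lemma mxtrace_conj_orthoproj_ge0 m n (X : 'M[R]_(m, n)) (P : 'M[R]_n) :
  orthoproj P -> 0 <= \tr (X *m P *m X^T).
Proof.
case=> Ps Pi; suff -> : X *m P *m X^T = (X *m P) *m (X *m P)^T by exact: mxtrace_mul_trmx_ge0.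
by rewrite trmx_mul Ps mulmxA -(mulmxA X P P) Pi.
Qed.

Lemma mxtrace_conj_orthoproj_le m n (X : 'M[R]_(m, n)) (P : 'M[R]_n) :
  orthoproj P -> \tr (X *m P *m X^T) <= \tr (X *m X^T).
Proof.
move=> /orthoproj_compl/(mxtrace_conj_orthoproj_ge0 X).
by rewrite mulmxBr mulmx1 mulmxBl linearB subr_ge0.
Qed.

Lemma mxtrace_orthoproj_mul_le n (P Q : 'M[R]_n) :
  orthoproj P -> orthoproj Q -> \tr (P *m Q) <= \tr Q.
Proof.
move=> oP [Qs Qi]; have := mxtrace_conj_orthoproj_le Q oP.
by rewrite Qs Qi mxtrace_mulC mulmxA Qi mxtrace_mulC.
Qed.

Lemma mxtrace_mul_orthoproj_conj_ge0 n (E S F : 'M[R]_n) :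
  orthoproj E -> orthoproj F -> 0 <= \tr (E *m S *m F *m S^T).
Proof.
move=> [Es Ei] oF; have := mxtrace_conj_orthoproj_ge0 (E *m S) oF.
by rewrite trmx_mul Es !mulmxA mxtrace_mulC !mulmxA Ei.
Qed.

Lemma mxtrace_trmx_mul_le m n (U V : 'M[R]_(m, n)) :
  \tr (U^T *m V) *+ 2 <= \tr (U^T *m U) + \tr (V^T *m V).
Proof.
have := mxtrace_mul_trmx_ge0 (U - V)^T.
rewrite trmxK [(U - V)^T]linearB /= mulmxBl !mulmxBr !linearB /=.
rewrite -[\tr (V^T *m U)]mxtrace_tr trmx_mul trmxK mulr2n; lra.
Qed.

Lemma mxtrace_mulmx_orthoproj_le m n (X : 'M[R]_(m, n)) (P : 'M[R]_n) :
  orthoproj P -> \tr ((X *m P)^T *m (X *m P)) <= \tr (X *m X^T).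
Proof.
move=> oP; have [Ps Pi] := oP; rewrite mxtrace_mulC trmx_mul Ps mulmxA -(mulmxA X P P) Pi.
exact: mxtrace_conj_orthoproj_le.
Qed.

Lemma mxtrace_orthogonal_conj_le n (Om A P : 'M[R]_n) :
  Om *m Om^T = 1%:M -> orthoproj P ->
  \tr (Om *m A^T *m Om^T *m A *m P) <= \tr (A *m A^T).
Proof.
move=> OmOt oP; have [Ps Pi] := oP.
set U := A *m Om^T *m P; set V := Om^T *m A *m P.
have -> : \tr (Om *m A^T *m Om^T *m A *m P) = \tr (U^T *m V).
  by rewrite !trmx_mul trmxK Ps !mulmxA -[in LHS]Pi mulmxA mxtrace_mulC !mulmxA.
have hU : \tr (U^T *m U) <= \tr (A *m A^T).
  apply: le_trans (mxtrace_mulmx_orthoproj_le _ oP) _.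
  by rewrite trmx_mul trmxK mulmxA -(mulmxA A) (mulmx1C OmOt) mulmx1.
have hV : \tr (V^T *m V) <= \tr (A *m A^T).
  apply: le_trans (mxtrace_mulmx_orthoproj_le _ oP) _.
  by rewrite trmx_mul trmxK mxtrace_mulC !mulmxA -(mulmxA _ Om) OmOt mulmx1 mxtrace_mulC.
have := le_trans (mxtrace_trmx_mul_le U V) (lerD hU hV).
by rewrite -mulr2n ler_pMn2r.
Qed.

Lemma gram_unitmx m n (N : 'M[R]_(m, n)) : row_free N -> N *m N^T \in unitmx.
Proof.
move=> freeN; rewrite -row_free_unit -kermx_eq0; apply/eqP; set K := kermx _.
have : (K *m N) *m (K *m N)^T = 0.
  by rewrite trmx_mul mulmxA -(mulmxA K) mulmx_ker mul0mx.
by move/mul_trmx_eq0/eqP; rewrite mulmx_free_eq0 // => /eqP.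
Qed.

Definition rowspace_proj m n (A : 'M[R]_(m, n)) : 'M[R]_n :=
  let N := row_base A in N^T *m invmx (N *m N^T) *m N.

Lemma rowspace_proj_orthoproj m n (A : 'M[R]_(m, n)) : orthoproj (rowspace_proj A).
Proof.
rewrite /rowspace_proj; move: (row_base A) (row_base_free A) => N /gram_unitmx Gu.
split; first by rewrite !trmx_mul trmxK trmx_inv trmx_mul trmxK mulmxA.
rewrite !mulmxA -(mulmxA (N^T *m _) N N^T) -(mulmxA (N^T *m _) (N *m N^T)).
by rewrite mulmxV // mulmx1.
Qed.

Lemma rowspace_proj_id m p n (A : 'M[R]_(m, n)) (B : 'M[R]_(p, n)) :
  (B <= A)%MS -> B *m rowspace_proj A = B.
Proof.
rewrite /rowspace_proj -(eq_row_base A).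
move: (row_base A) (row_base_free A) => N /gram_unitmx Gu sBN.
rewrite -(mulmxKpV sBN) -!mulmxA (mulmxA N N^T) (mulmxA (N *m N^T)).
by rewrite mulmxV // mul1mx.
Qed.

Lemma rowspace_proj_sub m n (A : 'M[R]_(m, n)) : (rowspace_proj A <= A)%MS.
Proof. by rewrite (submx_trans (submxMl _ _)) ?eq_row_base. Qed.

Lemma mxtrace_rowspace_proj m n (A : 'M[R]_(m, n)) :
  \tr (rowspace_proj A) = (\rank A)%:R.
Proof.
rewrite /rowspace_proj mxtrace_mulC mulmxA mulmxV ?mxtrace1 //.
exact/gram_unitmx/row_base_free.
Qed.

Lemma mxtrace_orthoproj_rank n (P : 'M[R]_n) : orthoproj P -> \tr P = (\rank P)%:R.
Proof.
move=> [Ps Pi]; have [Qs _] := rowspace_proj_orthoproj P.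
have PQ : P *m rowspace_proj P = P := rowspace_proj_id (submx_refl P).
have QP : rowspace_proj P *m P = rowspace_proj P.
  rewrite -{1}(mulmxKpV (rowspace_proj_sub P)) -(mulmxA _ P P) Pi.
  by rewrite mulmxKpV ?rowspace_proj_sub.
by rewrite -mxtrace_rowspace_proj -Qs -QP trmx_mul Ps Qs PQ.
Qed.

Lemma symplectic_orthoproj_trace_ge d (Om S E F : 'M[R]_d) :
  Om *m Om^T = 1%:M -> S *m Om *m S^T = Om ->
  orthoproj E -> orthoproj F -> E *m Om = Om *m E -> F *m Om = Om *m F ->
  \tr E + \tr F - d%:R <= \tr (E *m S *m F *m S^T).
Proof.
move=> OmOt symS oE oF EOm FOm; have [Es Ei] := oE; have [Fs Fi] := oF.
set T := Om *m S^T *m Om^T.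
have TS : T *m S = 1%:M by apply: mulmx1C; rewrite /T !mulmxA symS.
set A := E *m S *m F; set M := (1%:M - E) *m S *m F.
have adjA : Om *m A^T *m Om^T = F *m T *m E.
  have EOt : E *m Om^T = Om^T *m E by rewrite -{1}Es -trmx_mul -EOm trmx_mul Es.
  by rewrite /A /T !trmx_mul Es Fs !mulmxA -FOm -!mulmxA EOt.
clearbody T.
have splitF : F = Om *m A^T *m Om^T *m A + F *m T *m M.
  rewrite adjA /A /M !mulmxA -(mulmxA _ E E) Ei -!mulmxDl -mulmxDr addrC subrK mulmx1.
  by rewrite -(mulmxA F T S) TS mulmx1 Fi.
set P := 1%:M - rowspace_proj M.
have oP : orthoproj P := orthoproj_compl (rowspace_proj_orthoproj M).
have MP : M *m P = 0 by rewrite mulmxBr mulmx1 rowspace_proj_id ?subrr.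
have trFP : \tr (F *m P) <= \tr (E *m S *m F *m S^T).
  rewrite {1}splitF mulmxDl -(mulmxA _ M) MP mulmx0 addr0.
  apply: le_trans (mxtrace_orthogonal_conj_le _ OmOt oP) _.
  by rewrite /A !trmx_mul Fs Es !mulmxA -(mulmxA _ F F) Fi mxtrace_mulC !mulmxA Ei.
have trP : \tr (1%:M - P) <= d%:R - \tr E.
  have -> : d%:R - \tr E = \tr (1%:M - E) by rewrite linearB /= mxtrace1.
  rewrite subKr mxtrace_rowspace_proj (mxtrace_orthoproj_rank (orthoproj_compl oE)).
  by rewrite ler_nat /M -mulmxA mxrankM_maxl.
have := mxtrace_orthoproj_mul_le oF (orthoproj_compl oP).
rewrite mulmxBr mulmx1 linearB /= /A; lra.
Qed.

End RealTrace.

Lemma mxtrace_sum_conj (R : comPzRingType) d I J (r : seq I) (s : seq J)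
    (c : I -> R) (e : J -> R) (A : I -> 'M[R]_d) (B : J -> 'M[R]_d) (S : 'M[R]_d) :
  \tr ((\sum_(p <- r) c p *: A p) *m S *m (\sum_(q <- s) e q *: B q) *m S^T)
  = \sum_(p <- r) \sum_(q <- s) c p * e q * \tr (A p *m S *m B q *m S^T).
Proof.
rewrite !mulmx_suml linear_sum; apply: eq_bigr => p _.
rewrite mulmx_sumr mulmx_suml linear_sum; apply: eq_bigr => q _.
rewrite /= -scalemxAl -(scalemxAl (c p) (A p *m S)) scalemxAr scalerA.
by rewrite -scalemxAr -scalemxAl linearZ.
Qed.

Section StepDecomposition.
Variable R : numDomainType.

Lemma nondecreasing_step_sum n (a : 'I_n -> R) :
  (forall j, 0 <= a j) -> (forall i j : 'I_n, (i <= j)%N -> a i <= a j) ->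
  exists2 c : 'I_n -> R, (forall p, 0 <= c p) & forall j, a j = \sum_p c p * (p <= j)%N%:R.
Proof.
case: n a => [|n] a a_ge0 a_mono; first by exists (fun _ => 0) => // -[].
pose a' m := if m is m'.+1 then a (inord m') else 0.
exists (fun p : 'I_n.+1 => a' p.+1 - a' p) => [[[|p] ltp]|j] /=.
- by rewrite subr0.
- by rewrite subr_ge0 a_mono // !inordK // ltnW.
rewrite (eq_bigr (fun p : 'I_n.+1 => if (p < j.+1)%N then a' p.+1 - a' p else 0)).
  rewrite -big_mkcond -(big_ord_widen _ (fun p => a' p.+1 - a' p)) //.
  by rewrite -(big_mkord xpredT (fun p => a' p.+1 - a' p)) telescope_sumr //= subr0 inord_val.
by move=> p _; rewrite ltnS; case: leqP; rewrite ?mulr1 ?mulr0.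
Qed.

Lemma nonincreasing_step_sum n (b : 'I_n -> R) :
  (forall j, 0 <= b j) -> (forall i j : 'I_n, (i <= j)%N -> b j <= b i) ->
  exists2 c : 'I_n -> R, (forall q, 0 <= c q) & forall j, b j = \sum_q c q * (j <= q)%N%:R.
Proof.
move=> b_ge0 b_anti.
have [j|i j ij|c c_ge0 bE] := @nondecreasing_step_sum n (b \o @rev_ord n).
- exact: b_ge0.
- by apply: b_anti; rewrite /= leq_sub2l.
exists (c \o @rev_ord n) => [q|j]; first exact: c_ge0.
rewrite -[j in LHS]rev_ordK -[b _]/((b \o @rev_ord n) _) bE (reindex_inj rev_ord_inj) /=.
by apply: eq_bigr => q _; rewrite leq_sub2lE ?ltnS.
Qed.

End StepDecomposition.

Section StandardSymplecticForm.
Variables (R : comPzRingType) (n : nat).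

Lemma mate_proof (i : 'I_(2 * n)) : ((if odd i then i.-1 else i.+1) < 2 * n)%N.
Proof.
case: i => i /= lti; case: ifP => oddi; first exact: leq_ltn_trans (leq_pred i) lti.
rewrite ltn_neqAle lti andbT; apply/eqP => /(congr1 odd).
by rewrite /= oddi oddM.
Qed.

Definition mate (i : 'I_(2 * n)) : 'I_(2 * n) := Ordinal (mate_proof i).

Lemma mateK : involutive mate.
Proof.
move=> [i lti]; apply: val_inj => /=.
case: (boolP (odd i)) => oddi /=; last by rewrite oddi.
by case: i oddi {lti} => //= i /negbTE ->.
Qed.

Lemma half_mate (i : 'I_(2 * n)) : half_ord (mate i) = half_ord i.
Proof.
apply: val_inj => /=; case: i => [[|i] lti] //=.
by rewrite uphalf_half; case: (odd i).
Qed.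

Lemma OmegaE (i k : 'I_(2 * n)) :
  Omega R n i k = (k == mate i)%:R * (-1) ^+ odd i.
Proof.
rewrite mxE; have -> : (k == mate i) = (k == (if odd i then i.-1 else i.+1) :> nat) by [].
case: i k => [i lti] [k ltk] /=; case: (boolP (odd i)) => oddi.
  rewrite andbF sub0r mulrN1; congr (- _%:R).
  case: i oddi {lti} => // i /= oddi; rewrite eqSS.
  by case: eqP => // ->; rewrite oddi.
rewrite andbT mulr1 eq_sym.
have -> : (k.+1 == i) && ~~ odd k = false.
  by apply/andP => -[/eqP ki]; rewrite -ki /= negbK in oddi; rewrite oddi.
by rewrite subr0.
Qed.

Lemma Omega_mul_trmx : Omega R n *m (Omega R n)^T = 1%:M.
Proof.
apply/matrixP => i k; rewrite [LHS]mxE [RHS]mxE (bigD1 (mate i)) //=.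
rewrite big1 => [|j /negbTE neq_j].
  rewrite [_^T _ _]mxE !OmegaE eqxx mul1r addr0 (inj_eq (can_inj mateK)) eq_sym.
  by case: eqP => [->|_]; rewrite /= ?mul1r ?mul0r ?mulr0 // -expr2 sqrr_sign.
by rewrite OmegaE neq_j !mul0r.
Qed.

Lemma blockdiag2E (a : 'I_n -> R) : blockdiag2 a = diag_mx (\row_i a (half_ord i)).
Proof. by apply/matrixP => i k; rewrite !mxE mulr_natl. Qed.

Lemma trmx_blockdiag2 (a : 'I_n -> R) : (blockdiag2 a)^T = blockdiag2 a.
Proof. by rewrite blockdiag2E tr_diag_mx. Qed.

Lemma mul_blockdiag2 (a b : 'I_n -> R) :
  blockdiag2 a *m blockdiag2 b = blockdiag2 (fun j => a j * b j).
Proof.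
rewrite [blockdiag2 a]blockdiag2E mul_diag_mx; apply/matrixP => i k; rewrite !mxE.
by rewrite mulrCA.
Qed.

Lemma blockdiag2_Omega (a : 'I_n -> R) :
  blockdiag2 a *m Omega R n = Omega R n *m blockdiag2 a.
Proof.
rewrite blockdiag2E mul_diag_mx mul_mx_diag; apply/matrixP => i k.
rewrite [LHS]mxE [RHS]mxE !OmegaE !mxE; case: eqP => [->|_]; last by rewrite !mul0r mulr0.
by rewrite half_mate mulrC.
Qed.

Lemma eq_blockdiag2 (a b : 'I_n -> R) : a =1 b -> blockdiag2 a = blockdiag2 b.
Proof. by move=> eq_ab; apply/matrixP => i k; rewrite !mxE eq_ab. Qed.

Lemma blockdiag2_sum I (r : seq I) (c : I -> R) (x : I -> 'I_n -> R) :
  blockdiag2 (fun j => \sum_(p <- r) c p * x p j) = \sum_(p <- r) c p *: blockdiag2 (x p).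
Proof.
apply/matrixP => i k; rewrite !mxE summxE mulr_sumr.
by apply: eq_bigr => p _; rewrite !mxE mulrCA.
Qed.

Lemma orthoproj_blockdiag2 (b : 'I_n -> bool) :
  orthoproj (blockdiag2 (fun j => (b j)%:R : R)).
Proof.
split; first exact: trmx_blockdiag2.
by rewrite mul_blockdiag2; apply: eq_blockdiag2 => j; case: (b j); rewrite ?mulr1 ?mulr0.
Qed.

End StandardSymplecticForm.

Lemma mxtrace_step_blockdiag2_le (R : realFieldType) n (S : 'M[R]_(2 * n)) (p q : nat) :
  symplectic S ->
  \tr (blockdiag2 (fun j : 'I_n => (p <= j)%N%:R) *m blockdiag2 (fun j : 'I_n => (j <= q)%N%:R))
  <= \tr (blockdiag2 (fun j : 'I_n => (p <= j)%N%:R) *m S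
           *m blockdiag2 (fun j : 'I_n => (j <= q)%N%:R) *m S^T).
Proof.
move=> symS; set E := blockdiag2 (fun j => (p <= j)%N%:R); set F := blockdiag2 _.
have oE : orthoproj E by exact: orthoproj_blockdiag2.
have oF : orthoproj F by exact: orthoproj_blockdiag2.
have [ltqp | lepq] := ltnP q p.
  have -> : E *m F = 0.
    rewrite mul_blockdiag2; apply/matrixP => i k; rewrite !mxE.
    case: (leqP p (half_ord i)) => [lepj|_]; last by rewrite mul0r mulr0.
    by rewrite leqNgt (leq_trans ltqp lepj) mulr0 mulr0.
  by rewrite mxtrace0; exact: mxtrace_mul_orthoproj_conj_ge0.
have -> : E *m F = E + F - 1%:M.
  rewrite mul_blockdiag2; apply/matrixP => i k; rewrite !mxE.
  case: eqP => _ /=; last by rewrite !mul0r addr0 subr0.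
  rewrite !mul1r.
  case: (leqP p (half_ord i)) => lepj; case: (leqP (half_ord i) q) => lejq /=; try lra.
  by have := ltn_trans (leq_trans lepj lepq) lejq; rewrite ltnn.
rewrite linearB linearD /= mxtrace1.
apply: symplectic_orthoproj_trace_ge (Omega_mul_trmx R n) symS oE oF _ _;
  exact: blockdiag2_Omega.
Qed.

Theorem mainTheorem2 (R : realType) (n : nat) (alpha beta : 'I_n -> R)
  (alpha_ge0 : forall j, 0 <= alpha j)
  (alpha_mono : forall i j : 'I_n, (i <= j)%N -> alpha i <= alpha j)
  (beta_ge0 : forall j, 0 <= beta j)
  (beta_anti : forall i j : 'I_n, (i <= j)%N -> beta j <= beta i) :
  (exists S : 'M[R]_(2 * n), symplectic S /\
     \tr (blockdiag2 alpha *m S *m blockdiag2 beta *m S^T)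
     = \tr (blockdiag2 alpha *m blockdiag2 beta)) /\
  (forall S : 'M[R]_(2 * n), symplectic S ->
     \tr (blockdiag2 alpha *m blockdiag2 beta)
     <= \tr (blockdiag2 alpha *m S *m blockdiag2 beta *m S^T)).
Proof.
split.
  exists 1%:M; split; first by rewrite /symplectic mul1mx trmx1 mulmx1.
  by rewrite trmx1 !mulmx1.
move=> S symS.
have [c c_ge0 alphaE] := nondecreasing_step_sum alpha_ge0 alpha_mono.
have [e e_ge0 betaE] := nonincreasing_step_sum beta_ge0 beta_anti.
have -> : blockdiag2 alpha *m blockdiag2 beta =
          blockdiag2 alpha *m 1%:M *m blockdiag2 beta *m 1%:M^T by rewrite trmx1 !mulmx1.
rewrite (eq_blockdiag2 alphaE) (eq_blockdiag2 betaE) !blockdiag2_sum !mxtrace_sum_conj.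
apply: ler_sum => p _; apply: ler_sum => q _; rewrite ler_wpM2l ?mulr_ge0 //.
by rewrite trmx1 !mulmx1; exact: mxtrace_step_blockdiag2_le.
Qed.
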